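(* For a real parameter $a\ge \tfrac12$, let $$\rho_a=\frac{1}{3(3+a)}\begin{pmatrix} 1&0&0&0&1&0&0&0&1\\ 0&a&0&1&0&0&0&0&0\\ 0&0&2&0&0&0&1&0&0\\ 0&1&0&2&0&0&0&0&0\\ 1&0&0&0&1&0&0&0&1\\ 0&0&0&0&0&a&0&1&0\\ 0&0&1&0&0&0&a&0&0\\ 0&0&0&0&0&1&0&2&0\\ 1&0&0&0&1&0&0&0&1 \end{pmatrix}$$ in the product basis $|i\rangle|j\rangle$, $i,j\in\{1,2,3\}$, ordered lexicographically, of $\mathbb{C}^3\otimes\mathbb{C}^3$. Let $\Gamma: M_3(\mathbb{C})\to M_3(\mathbb{C})$ be $$\Gamma(A)=\frac12\begin{pmatrix}a_{11}+a_{22}&-a_{12}&-a_{13}\\-a_{21}&a_{22}+a_{33}&-a_{23}\\-a_{31}&-a_{32}&a_{33}+a_{11}\end{pmatrix},\qquad A=(a_{ij}).$$ Then $\rho_a$ is a state whose partial transpose is positive semidefinite, the matrix $(I\otimes\Gamma)(\rho_a)$ has $\frac{a-1}{18+6a}$ as an eigenvalue (with eigenvector $|1\rangle|1\rangle+|2\rangle|2\rangle+|3\rangle|3\rangle$), its coefficient $D_9=-\det\big((I\otimes\Gamma)(\rho_a)\big)$ is strictly positive whenever $\tfrac12\le a<1$, and consequently $\rho_a$ is entangled for every $a$ with $\tfrac12\le a<1$.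
   Context: A state on $\mathbb{C}^3\otimes\mathbb{C}^3$ is a positive semidefinite $9\times 9$ matrix of trace one; it is separable if it is a convex combination of product states $\rho_A\otimes\rho_B$, and entangled otherwise. The partial transpose $\rho^{T_B}$ is defined by $\langle m|\langle\mu|\rho^{T_B}|n\rangle|\nu\rangle=\langle m|\langle\nu|\rho|n\rangle|\mu\rangle$. $(I\otimes\Gamma)(\rho)$ means applying $\Gamma$ to each $3\times3$ block $\rho_{(i,\cdot),(k,\cdot)}$ of $\rho$ (blocks indexed by the first factor). $D_9$ denotes the constant coefficient in $\det(\lambda I-M)=\lambda^9+D_1\lambda^8+\cdots+D_9$ for $M=(I\otimes\Gamma)(\rho_a)$. The map $\Gamma$ is a positive (indecomposable) linear map, i.e., it maps positive semidefinite matrices to positive semidefinite matrices. *)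

From HB Require Import structures.
From mathcomp Require Import all_boot all_order all_algebra.
From mathcomp Require Import complex mxtens.
Set Implicit Arguments. Unset Strict Implicit. Unset Printing Implicit Defensive.
Import Order.TTheory GRing.Theory Num.Theory.
Local Open Scope ring_scope.

Section QInfo.
Variable C : numClosedFieldType.

Definition adjmx {m n} (A : 'M[C]_(m, n)) : 'M[C]_(n, m) := (map_mx Num.conj A)^T.

Definition psd {n} (A : 'M[C]_n) : Prop :=
  A = adjmx A /\ forall v : 'cV[C]_n, 0 <= (adjmx v *m A *m v) 0 0.

Definition is_state {n} (A : 'M[C]_n) : Prop := psd A /\ \tr A = 1.

(* separable state on C^m (x) C^n: finite convex combination of product states
   rho_A (x) rho_B; the basis |i>|j> is indexed by mxtens_index (i,j) = i*n+j *)
Definition separable {m n} (rho : 'M[C]_(m * n)) : Prop :=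
  exists (k : nat) (p : 'I_k -> C) (A : 'I_k -> 'M[C]_m) (B : 'I_k -> 'M[C]_n),
    [/\ forall i, 0 <= p i,
        \sum_(i < k) p i = 1,
        forall i, is_state (A i) /\ is_state (B i)
      & rho = \sum_(i < k) p i *: (A i *t B i)].

Definition entangled {m n} (rho : 'M[C]_(m * n)) : Prop :=
  is_state rho /\ ~ separable rho.

(* partial transpose on the second factor:
   <m|<mu| rho^TB |n>|nu> = <m|<nu| rho |n>|mu> *)
Definition ptB {m n} (rho : 'M[C]_(m * n)) : 'M[C]_(m * n) :=
  \matrix_(x, y)
    rho (mxtens_index ((mxtens_unindex x).1, (mxtens_unindex y).2))
        (mxtens_index ((mxtens_unindex y).1, (mxtens_unindex x).2)).

(* (I (x) Phi)(rho): apply Phi to each n x n block rho_{(i,.),(k,.)} *)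
Definition idtens {m n} (Phi : 'M[C]_n -> 'M[C]_n) (rho : 'M[C]_(m * n))
  : 'M[C]_(m * n) :=
  \matrix_(x, y)
    Phi (\matrix_(mu, nu) rho (mxtens_index ((mxtens_unindex x).1, mu))
                             (mxtens_index ((mxtens_unindex y).1, nu)))
        (mxtens_unindex x).2 (mxtens_unindex y).2.

(* the map Gamma on M_3: diagonal entries (a_ii + a_{i+1,i+1})/2 (indices
   cyclic, ordS = cyclic successor), off-diagonal entries -a_ij/2 *)
Definition Gamma (A : 'M[C]_3) : 'M[C]_3 :=
  \matrix_(i, j) if i == j then (A i i + A (ordS i) (ordS i)) / 2
                 else - (A i j) / 2.

Definition maxent_vec : 'cV[C]_(3 * 3) :=
  \col_x (if (mxtens_unindex x).1 == (mxtens_unindex x).2 then 1 else 0).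

End QInfo.

Definition rho_pattern {C : numClosedFieldType} (a : C) : seq (seq C) :=
  [:: [:: 1; 0; 0; 0; 1; 0; 0; 0; 1];
      [:: 0; a; 0; 1; 0; 0; 0; 0; 0];
      [:: 0; 0; 2; 0; 0; 0; 1; 0; 0];
      [:: 0; 1; 0; 2; 0; 0; 0; 0; 0];
      [:: 1; 0; 0; 0; 1; 0; 0; 0; 1];
      [:: 0; 0; 0; 0; 0; a; 0; 1; 0];
      [:: 0; 0; 1; 0; 0; 0; a; 0; 0];
      [:: 0; 0; 0; 0; 0; 1; 0; 2; 0];
      [:: 1; 0; 0; 0; 1; 0; 0; 0; 1]].

(* rho_a = 1/(3(3+a)) * pattern, row/column x = 3*i + j for |i>|j> (0-based) *)
Definition rho_a (R : rcfType) (a : R) : 'M[R[i]]_(3 * 3) :=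
  (1 / (3 * (3 + (a%:C)%C))) *:
    \matrix_(x, y) nth 0 (nth [::] (rho_pattern (a%:C)%C) x) y.

From HB Require Import structures.
From mathcomp Require Import all_boot all_order all_algebra.
From mathcomp Require Import complex mxtens sesquilinear spectral.
From mathcomp.algebra_tactics Require Import ring lra.
Import Order.TTheory GRing.Theory Num.Theory.
Set Implicit Arguments. Unset Strict Implicit. Unset Printing Implicit Defensive.
Local Open Scope ring_scope.

(* For a < 1 the state rho_a is detected by the witness
   W(rho) = <Omega| (I (x) Gamma)(rho) |Omega>, Omega = |11> + |22> + |33>.
   Gamma is a positive map: <u| Gamma(B) |u> pairs B with a matrix whose
   positivity is a cyclic Cauchy-Schwarz inequality, proved by clearing
   denominators down to the cyclic AM-GM inequality.  Hence W is nonnegative on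
   product states and, being linear, on separable ones; but Omega is an
   eigenvector of (I (x) Gamma)(rho_a) with eigenvalue (a - 1)/(18 + 6a) < 0.
   The sign of D_9 = - det is read off an LU factorisation. *)

Lemma cyclic_AMGM3 (R : realFieldType) (x y z : R) : 0 <= x -> 0 <= y -> 0 <= z ->
  3 * x * y * z <= x ^+ 2 * y + y ^+ 2 * z + z ^+ 2 * x.
Proof.
move=> x_ge0 y_ge0 z_ge0; rewrite -subr_ge0.
(* [Ex], [Ey], [Ez] are sums of nonnegative terms when [x], [y], [z]
   respectively is the largest. *)
have Ex : x^+2*y + y^+2*z + z^+2*x - 3*x*y*z = x*(z-y)^+2 + y*((x-z)*(x-y)) by ring.
have Ey : x^+2*y + y^+2*z + z^+2*x - 3*x*y*z = y*(x-z)^+2 + z*((y-x)*(y-z)) by ring.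
have Ez : x^+2*y + y^+2*z + z^+2*x - 3*x*y*z = z*(y-x)^+2 + x*((z-y)*(z-x)) by ring.
have [lexy|ltyx] := lerP x y; have [leyz|ltzy] := lerP y z;
  [rewrite Ez | rewrite Ey | have [lexz|ltzx] := lerP x z; [rewrite Ez | rewrite Ex]
  | rewrite Ex];
  by apply: addr_ge0; apply: mulr_ge0; rewrite ?sqr_ge0 //; apply: mulr_ge0; lra.
Qed.

Lemma sqr_dot3_le_cyclic (R : realFieldType) (x1 x2 x3 y1 y2 y3 : R) :
  (x1 * y1 + x2 * y2 + x3 * y3) ^+ 2 <=
    x1 ^+ 2 * (2 * y1 ^+ 2 + y3 ^+ 2) + x2 ^+ 2 * (2 * y2 ^+ 2 + y1 ^+ 2)
  + x3 ^+ 2 * (2 * y3 ^+ 2 + y2 ^+ 2).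
Proof.
have sqr2_ge0 (u : R) : 0 <= 2 * u ^+ 2 := mulr_ge0 (ler0n _ 2) (sqr_ge0 u).
have weight_ge0 (u v : R) : 0 <= 2 * u ^+ 2 + v ^+ 2 := addr_ge0 (sqr2_ge0 u) (sqr_ge0 v).
have weight_eq0 (u v : R) : 2 * u ^+ 2 + v ^+ 2 = 0 -> u = 0 /\ v = 0.
  move/eqP; rewrite paddr_eq0 ?sqr2_ge0 ?sqr_ge0 //.
  by rewrite mulf_eq0 pnatr_eq0 /= !sqrf_eq0 => /andP[/eqP-> /eqP->].
rewrite -subr_ge0.
set e1 := 2 * y1 ^+ 2 + y3 ^+ 2; set e2 := 2 * y2 ^+ 2 + y1 ^+ 2.
set e3 := 2 * y3 ^+ 2 + y2 ^+ 2; set F := _ - _.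
have e1_ge0 : 0 <= e1 := weight_ge0 y1 y3.
have e2_ge0 : 0 <= e2 := weight_ge0 y2 y1.
have e3_ge0 : 0 <= e3 := weight_ge0 y3 y2.
have [|e_neq0] := eqVneq (e1 * e2 * e3) 0.
  move/eqP; rewrite !mulf_eq0 => /orP[/orP[]|] /eqP/weight_eq0[u_eq0 v_eq0];
    by rewrite /F /e1 /e2 /e3 u_eq0 v_eq0; nra.
(* Clearing the weights leaves the cyclic AM-GM term times a positive form
   plus three squares. *)
have E : e1 * e2 * e3 * F =
    (y1^+2 ^+ 2 * y2^+2 + y2^+2 ^+ 2 * y3^+2 + y3^+2 ^+ 2 * y1^+2
       - 3 * y1^+2 * y2^+2 * y3^+2) * (e1 * x1^+2 + e2 * x2^+2 + e3 * x3^+2)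
  + e3 * (e1 * x1 * y2 - e2 * x2 * y1) ^+ 2 + e2 * (e1 * x1 * y3 - e3 * x3 * y1) ^+ 2
  + e1 * (e2 * x2 * y3 - e3 * x3 * y2) ^+ 2.
  by rewrite /F /e1 /e2 /e3; ring.
have e_gt0 : 0 < e1 * e2 * e3 by rewrite lt_def e_neq0 !mulr_ge0.
rewrite -(pmulr_rge0 _ e_gt0) E.
have := cyclic_AMGM3 (sqr_ge0 y1) (sqr_ge0 y2) (sqr_ge0 y3); rewrite -subr_ge0.
move=> amgm; repeat apply: addr_ge0; apply: mulr_ge0 => //; try exact: sqr_ge0.
by repeat apply: addr_ge0; apply: mulr_ge0 => //; exact: sqr_ge0.
Qed.

Section PsdPairing.
Variable C : numClosedFieldType.

Definition nneg_qform n (G : 'M[C]_n) : Prop :=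
  forall u : 'cV[C]_n, 0 <= (adjmx u *m G *m u) 0 0.

Definition mxpair n (A G : 'M[C]_n) : C := \sum_i \sum_k A i k * G i k.

Lemma adjmxE m n (A : 'M[C]_(m, n)) : adjmx A = (A ^t* )%sesqui.
Proof. by rewrite /adjmx map_trmx. Qed.

Lemma psd_sum_rank1 n (A : 'M[C]_n) : psd A ->
  exists (d : 'rV[C]_n) (P : 'M[C]_n), (forall j, 0 <= d 0 j) /\
    forall i k, A i k = \sum_j d 0 j * (Num.conj (P j i) * P j k).
Proof.
move=> [A_herm A_qform].
have /orthomx_spectralP : A \is normalmx by apply/normalmxP; rewrite -adjmxE -A_herm.
set P := spectralmx A; set d := spectral_diag A.
have P_unitary : P \is unitarymx by exact: spectral_unitarymx.
rewrite invmx_unitary // => EA.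
have PPt : P *m (P ^t* )%sesqui = 1%:M by apply/unitarymxP.
exists d, P; split => [j|i k]; last first.
  by rewrite EA mul_mx_diag !mxE; apply: eq_bigr => j _; rewrite !mxE; ring.
have -> : d 0 j = (P *m A *m (P ^t* )%sesqui) j j.
  by rewrite EA !mulmxA PPt mul1mx -mulmxA PPt mulmx1 mxE eqxx mulr1n.
have := A_qform (\col_i Num.conj (P j i)).
congr (_ <= _); rewrite !mxE; apply: eq_bigr => k _; rewrite !mxE.
by congr (_ * _); apply: eq_bigr => i _; rewrite !mxE conjCK.
Qed.

Lemma mxpair_psd_ge0 n (A G : 'M[C]_n) : psd A -> nneg_qform G -> 0 <= mxpair A G.
Proof.
move=> /psd_sum_rank1[d [P [d_ge0 EA]]] G_qform.
rewrite /mxpair.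
under eq_bigr do under eq_bigr do rewrite EA mulr_suml.
under eq_bigr do rewrite exchange_big /=.
rewrite exchange_big /=; apply: sumr_ge0 => j _.
set p := \col_i P j i.
have -> : \sum_i \sum_k d 0 j * (Num.conj (P j i) * P j k) * G i k =
    d 0 j * (adjmx p *m G *m p) 0 0.
  rewrite !mxE mulr_sumr [LHS]exchange_big /=; apply: eq_bigr => k _.
  rewrite !mxE mulr_suml mulr_sumr; apply: eq_bigr => i _; rewrite !mxE; ring.
exact: mulr_ge0.
Qed.

End PsdPairing.

Lemma ordS_ord_pred_I3 :
  ((ordS (ord0 : 'I_3) = lift ord0 ord0)
   * (ordS (lift ord0 ord0 : 'I_3) = lift ord0 (lift ord0 ord0))
   * (ordS (lift ord0 (lift ord0 ord0) : 'I_3) = ord0)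
   * (ord_pred (ord0 : 'I_3) = lift ord0 (lift ord0 ord0))
   * (ord_pred (lift ord0 ord0 : 'I_3) = ord0)
   * (ord_pred (lift ord0 (lift ord0 ord0) : 'I_3) = lift ord0 ord0))%type.
Proof. by do !split; apply: val_inj. Qed.

(* The transpose of [Gamma^T (u u^* )], where [Gamma^T] is the adjoint of
   [Gamma] for the pairing [tr (X Y)]. *)
Definition Gamma_dual (C : numClosedFieldType) (u : 'cV[C]_3) : 'M[C]_3 :=
  \matrix_(j, l)
    if j == l then (Num.conj (u j 0) * u j 0
                    + Num.conj (u (ord_pred j) 0) * u (ord_pred j) 0) / 2
    else - (Num.conj (u j 0) * u l 0) / 2.

Lemma Gamma_qformE (C : numClosedFieldType) (B : 'M[C]_3) (u : 'cV[C]_3) :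
  (adjmx u *m Gamma B *m u) 0 0 = mxpair B (Gamma_dual u).
Proof. by rewrite /mxpair ?(big_ord_recl, big_ord0, mxE) /= !ordS_ord_pred_I3; ring. Qed.

Section ComplexGamma.
Variable R : rcfType.
Local Notation C := R[i].

Lemma normC_Re (x : C) : `|x| = ((complex.Re `|x|)%:C)%C.
Proof. by rewrite [LHS]complexE (ger0_Im (normr_ge0 x)) rmorph0 mulr0 addr0. Qed.

Lemma Gamma_dual_nneg_qform (u : 'cV[C]_3) : nneg_qform (Gamma_dual u).
Proof.
move=> w.
set u0 := u ord0 0; set u1 := u (lift ord0 ord0) 0.
set u2 := u (lift ord0 (lift ord0 ord0)) 0.
set w0 := w ord0 0; set w1 := w (lift ord0 ord0) 0.
set w2 := w (lift ord0 (lift ord0 ord0)) 0.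
have -> : (adjmx w *m Gamma_dual u *m w) 0 0 =
   (`|w0|^+2 * (2 * `|u0|^+2 + `|u2|^+2) + `|w1|^+2 * (2 * `|u1|^+2 + `|u0|^+2)
    + `|w2|^+2 * (2 * `|u2|^+2 + `|u1|^+2) - `|u0 * w0 + u1 * w1 + u2 * w2|^+2) / 2.
  rewrite !normCK !rmorphD !rmorphM ?(big_ord_recl, big_ord0, mxE) /=.
  by rewrite !ordS_ord_pred_I3 -/u0 -/u1 -/u2 -/w0 -/w1 -/w2; ring.
rewrite divr_ge0 // subr_ge0.
have triangle : `|u0 * w0 + u1 * w1 + u2 * w2| <= `|u0| * `|w0| + `|u1| * `|w1| + `|u2| * `|w2|.
  by rewrite -!normrM (le_trans (ler_normD _ _)) // lerD2r ler_normD.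
apply: le_trans (_ : (`|u0| * `|w0| + `|u1| * `|w1| + `|u2| * `|w2|) ^+ 2 <= _).
  by rewrite lerXn2r ?nnegrE ?addr_ge0 ?mulr_ge0.
have := sqr_dot3_le_cyclic (complex.Re `|w0|) (complex.Re `|w1|) (complex.Re `|w2|)
             (complex.Re `|u0|) (complex.Re `|u1|) (complex.Re `|u2|).
rewrite -lecR !(rmorphD, rmorphM, rmorphXn, rmorph_nat) /= -!normC_Re.
by rewrite ![`|w0| * _]mulrC ![`|w1| * _]mulrC ![`|w2| * _]mulrC.
Qed.

Lemma Gamma_positive (B : 'M[C]_3) : psd B -> nneg_qform (Gamma B).
Proof.
by move=> B_psd u; rewrite Gamma_qformE mxpair_psd_ge0 //; apply: Gamma_dual_nneg_qform.
Qed.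

End ComplexGamma.

Lemma sum_mxtens_index (V : nmodType) m n (F : 'I_(m * n) -> V) :
  \sum_x F x = \sum_i \sum_j F (mxtens_index (i, j)).
Proof.
rewrite pair_big /= (reindex (@mxtens_index m n)) /=; first by apply: eq_bigr => -[].
by exists (@mxtens_unindex m n) => x _; rewrite ?mxtens_indexK ?mxtens_unindexK.
Qed.

Section Witness.
Variable C : numClosedFieldType.

Lemma maxent_vecE (i j : 'I_3) :
  maxent_vec C (mxtens_index (i, j)) 0 = (i == j)%:R.
Proof. by rewrite mxE mxtens_indexK /=; case: eqP. Qed.

Lemma adjmx_maxent_vec : adjmx (maxent_vec C) = (maxent_vec C)^T.
Proof. by apply/matrixP => i j; rewrite !mxE; case: ifP; rewrite ?rmorph0 ?rmorph1. Qed.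

Lemma maxent_qformE (M : 'M[C]_(3 * 3)) :
  (adjmx (maxent_vec C) *m M *m maxent_vec C) 0 0 =
  \sum_i \sum_k M (mxtens_index (i, i)) (mxtens_index (k, k)).
Proof.
rewrite [RHS]exchange_big adjmx_maxent_vec mxE sum_mxtens_index /=.
apply: eq_bigr => k _; rewrite (bigD1 k) //= big1 => [|l /negbTE neq_lk]; last first.
  by rewrite maxent_vecE eq_sym neq_lk mulr0.
rewrite maxent_vecE eqxx mulr1 addr0 mxE sum_mxtens_index.
apply: eq_bigr => i _; rewrite (bigD1 i) //= big1 => [|j /negbTE neq_ji].
  by rewrite mxE maxent_vecE eqxx mul1r addr0.
by rewrite mxE maxent_vecE eq_sym neq_ji mul0r.
Qed.

Definition Gamma_witness (rho : 'M[C]_(3 * 3)) : C :=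
  (adjmx (maxent_vec C) *m idtens (@Gamma C) rho *m maxent_vec C) 0 0.

Lemma idtens_Gamma_tens m (A : 'M[C]_m) (B : 'M[C]_3) :
  idtens (@Gamma C) (A *t B) = A *t Gamma B.
Proof. by apply/matrixP => x y; rewrite !mxE !mxtens_indexK /=; case: eqP => _; ring. Qed.

Lemma idtens_Gamma_lincomb m k (p : 'I_k -> C) (T : 'I_k -> 'M[C]_(m * 3)) :
  idtens (@Gamma C) (\sum_i p i *: T i) = \sum_i p i *: idtens (@Gamma C) (T i).
Proof.
apply/matrixP => x y; rewrite summxE.
under [RHS]eq_bigr do rewrite !mxE.
rewrite !mxE !summxE; case: eqP => _.
- under [X in X + _]eq_bigr do rewrite mxE.
  under [X in _ + X]eq_bigr do rewrite mxE.
  by rewrite -big_split /= mulr_suml; apply: eq_bigr => i _; ring.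
- under [X in - X]eq_bigr do rewrite mxE.
  by rewrite -sumrN mulr_suml; apply: eq_bigr => i _; ring.
Qed.

Lemma Gamma_witness_tens (A B : 'M[C]_3) : Gamma_witness (A *t B) = mxpair A (Gamma B).
Proof.
rewrite /Gamma_witness maxent_qformE idtens_Gamma_tens.
by apply: eq_bigr => i _; apply: eq_bigr => k _; rewrite tensmxE.
Qed.

Lemma Gamma_witness_lincomb k (p : 'I_k -> C) (T : 'I_k -> 'M[C]_(3 * 3)) :
  Gamma_witness (\sum_i p i *: T i) = \sum_i p i * Gamma_witness (T i).
Proof.
rewrite /Gamma_witness idtens_Gamma_lincomb mulmx_sumr mulmx_suml summxE.
by apply: eq_bigr => i _; rewrite -scalemxAr -scalemxAl mxE.
Qed.

End Witness.

Lemma separable_Gamma_witness_ge0 (R : rcfType) (rho : 'M[R[i]]_(3 * 3)) :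
  separable rho -> 0 <= Gamma_witness rho.
Proof.
move=> [k [p [A [B [p_ge0 _ AB_states ->]]]]].
rewrite Gamma_witness_lincomb sumr_ge0 // => i _.
have [[A_psd _] [B_psd _]] := AB_states i.
by rewrite mulr_ge0 // Gamma_witness_tens mxpair_psd_ge0 //; apply: Gamma_positive.
Qed.

Section RhoA.
Variables (R : rcfType) (a : R).
Hypothesis a_ge : 1 / 2 <= a.
Local Notation C := R[i].
Local Notation ac := (a%:C)%C.

Lemma a_ge_C : 1 / 2 <= ac.
Proof. by have := a_ge; rewrite -lecR fmorph_div rmorph1 rmorph_nat. Qed.

Lemma a_gt0_C : 0 < ac.
Proof. by apply: lt_le_trans a_ge_C; rewrite divr_gt0 ?ltr01 ?ltr0n. Qed.

Lemma rho_a_denoms_neq0 :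
  ((3 + ac != 0)%R * (ac != 0) * (1 + ac != 0)%R * (ac + 2 != 0)%R
   * (18 + 6 * ac != 0)%R)%type.
Proof. by have := a_gt0_C; do !split; rewrite gt_eqF // ?addr_gt0 ?mulr_gt0. Qed.

Lemma rho_a_scale_gt0 : 0 < 1 / (3 * (3 + ac)).
Proof. by rewrite divr_gt0 ?mulr_gt0 ?addr_gt0 ?a_gt0_C. Qed.

Lemma tr_rho_a : \tr (rho_a a) = 1.
Proof.
by rewrite /mxtrace ?(big_ord_recl, big_ord0, mxE) /=; field; rewrite rho_a_denoms_neq0.
Qed.

Lemma rho_a_herm : rho_a a = adjmx (rho_a a).
Proof.
have c_real : 1 / (3 * (3 + ac)) \is Num.real by apply: gtr0_real; exact: rho_a_scale_gt0.
apply/matrixP => x y; rewrite !mxE.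
case: x => [[|[|[|[|[|[|[|[|[|//]]]]]]]]] ?];
case: y => [[|[|[|[|[|[|[|[|[|//]]]]]]]]] ?] /=;
  by rewrite conj_Creal // realM // ?real0 ?real1 ?realn // ger0_real // ltW ?a_gt0_C.
Qed.

Lemma rho_a_nneg_qform : nneg_qform (rho_a a).
Proof.
move=> v; rewrite ?(big_ord_recl, big_ord0, mxE) /=.
set c := 1 / _.
set v0 := v ord0 0.
set v1 := v (lift ord0 ord0) 0.
set v2 := v (lift ord0 (lift ord0 ord0)) 0.
set v3 := v (lift ord0 (lift ord0 (lift ord0 ord0))) 0.
set v4 := v (lift ord0 (lift ord0 (lift ord0 (lift ord0 ord0)))) 0.
set v5 := v (lift ord0 (lift ord0 (lift ord0 (lift ord0 (lift ord0 ord0))))) 0.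
set v6 := v (lift ord0 (lift ord0 (lift ord0 (lift ord0 (lift ord0 (lift ord0 ord0)))))) 0.
set v7 := v (lift ord0 (lift ord0 (lift ord0 (lift ord0 (lift ord0 (lift ord0 (lift ord0 ord0))))))) 0.
set v8 := v (lift ord0 (lift ord0 (lift ord0 (lift ord0 (lift ord0 (lift ord0 (lift ord0 (lift ord0 ord0)))))))) 0.
have normsq_ge0 (x : C) : 0 <= Num.conj x * x by rewrite mulrC -normCK exprn_ge0.
(* Up to the factor [c], the form splits along the all-ones block on
   [|11>, |22>, |33>] and three blocks [[a, 1], [1, 2]], the latter being
   [(a - 1/2) |x|^2 + 2 |y + x/2|^2]. *)
have SOS : 0 <= c * (Num.conj (v0 + v4 + v8) * (v0 + v4 + v8)
   + (ac - 1/2) * (Num.conj v1 * v1) + 2 * (Num.conj (v3 + v1/2) * (v3 + v1/2))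
   + (ac - 1/2) * (Num.conj v6 * v6) + 2 * (Num.conj (v2 + v6/2) * (v2 + v6/2))
   + (ac - 1/2) * (Num.conj v5 * v5) + 2 * (Num.conj (v7 + v5/2) * (v7 + v5/2))).
  have a_half : 0 <= ac - 1/2 by rewrite subr_ge0 a_ge_C.
  rewrite mulr_ge0 ?(ltW rho_a_scale_gt0) //.
  by repeat apply: addr_ge0; rewrite ?normsq_ge0 // mulr_ge0 ?normsq_ge0 ?ler0n.
apply: (le_trans SOS); rewrite le_eqVlt; apply/orP; left; apply/eqP.
rewrite !(rmorphD, rmorphM, fmorphV, rmorph_nat) /c; field; rewrite ?rho_a_denoms_neq0 //.
Qed.

Lemma rho_a_state : is_state (rho_a a).
Proof. by split; [split; [exact: rho_a_herm | exact: rho_a_nneg_qform] | exact: tr_rho_a]. Qed.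

Lemma ptB_rho_a : ptB (rho_a a) = rho_a a.
Proof.
apply/matrixP => x y; rewrite !mxE.
by case: x => [[|[|[|[|[|[|[|[|[|//]]]]]]]]] ?];
   case: y => [[|[|[|[|[|[|[|[|[|//]]]]]]]]] ?].
Qed.

Lemma maxent_vec_eigen_rho_a :
  idtens (@Gamma C) (rho_a a) *m maxent_vec C =
  (((a - 1) / (18 + 6 * a))%:C)%C *: maxent_vec C.
Proof.
rewrite fmorph_div rmorphB rmorphD rmorphM !rmorph_nat rmorph1.
apply/matrixP => x y; rewrite !mxE ?(big_ord_recl, big_ord0) !mxE.
by case: x => [[|[|[|[|[|[|[|[|[|//]]]]]]]]] ?] /=; field; rewrite ?rho_a_denoms_neq0.
Qed.

Lemma Gamma_witness_rho_a :
  Gamma_witness (rho_a a) = 3 * (((a - 1) / (18 + 6 * a))%:C)%C.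
Proof.
rewrite /Gamma_witness -mulmxA maxent_vec_eigen_rho_a -scalemxAr mxE mulrC.
rewrite ?(big_ord_recl, big_ord0, mxE) /= ?(rmorph0, rmorph1, mulr0, mulr1, add0r, addr0).
by congr (_ * _); ring.
Qed.

Lemma Gamma_witness_rho_a_lt0 : a < 1 -> Gamma_witness (rho_a a) < 0.
Proof.
move=> a_lt1; rewrite Gamma_witness_rho_a pmulr_rlt0 // -(rmorph0 (real_complex R)) ltcR.
by rewrite pmulr_llt0 ?invr_gt0; move: a_ge; lra.
Qed.

(* Gaussian elimination without pivoting on [(I (x) Gamma)(rho_a)]: [L] records
   the multipliers and [U] the echelon form, whose diagonal carries the pivots. *)
Definition L_pattern (x : C) : seq (seq C) :=
  [:: [:: 1; 0; 0; 0; 0; 0; 0; 0; 0];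
      [:: 0; 1; 0; 0; 0; 0; 0; 0; 0];
      [:: 0; 0; 1; 0; 0; 0; 0; 0; 0];
      [:: 0; - 1 / (x + 2); 0; 1; 0; 0; 0; 0; 0];
      [:: - 1 / (1 + x); 0; 0; 0; 1; 0; 0; 0; 0];
      [:: 0; 0; 0; 0; 0; 1; 0; 0; 0];
      [:: 0; 0; - 1 / 3; 0; 0; 0; 1; 0; 0];
      [:: 0; 0; 0; 0; 0; - 1 / (x + 2); 0; 1; 0];
      [:: - 1 / (1 + x); 0; 0; 0; - 1 / x; 0; 0; 0; 1]].

Definition U_pattern (x : C) : seq (seq C) :=
  [:: [:: 1 + x; 0; 0; 0; -1; 0; 0; 0; -1];
      [:: 0; x + 2; 0; -1; 0; 0; 0; 0; 0];
      [:: 0; 0; 3; 0; 0; 0; -1; 0; 0];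
      [:: 0; 0; 0; (3 * x + 5) / (x + 2); 0; 0; 0; 0; 0];
      [:: 0; 0; 0; 0; x * (x + 2) / (1 + x); 0; 0; 0; - (x + 2) / (1 + x)];
      [:: 0; 0; 0; 0; 0; x + 2; 0; -1; 0];
      [:: 0; 0; 0; 0; 0; 0; (3 * x + 5) / 3; 0; 0];
      [:: 0; 0; 0; 0; 0; 0; 0; (3 * x + 5) / (x + 2); 0];
      [:: 0; 0; 0; 0; 0; 0; 0; 0; (x + 2) * (x - 1) / x]].

Definition L_factor (x : C) : 'M[C]_(3 * 3) :=
  \matrix_(i, j) nth 0 (nth [::] (L_pattern x) i) j.

Definition U_factor (x : C) : 'M[C]_(3 * 3) :=
  (1 / (6 * (3 + x))) *: \matrix_(i, j) nth 0 (nth [::] (U_pattern x) i) j.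

Lemma idtens_Gamma_rho_a_LU : idtens (@Gamma C) (rho_a a) = L_factor ac *m U_factor ac.
Proof.
apply/matrixP => x y; rewrite !mxE ?(big_ord_recl, big_ord0) !mxE.
by case: x => [[|[|[|[|[|[|[|[|[|//]]]]]]]]] ?];
   case: y => [[|[|[|[|[|[|[|[|[|//]]]]]]]]] ?] /=; field; rewrite ?rho_a_denoms_neq0.
Qed.

Lemma det_L_factor : \det (L_factor ac) = 1.
Proof.
rewrite det_trig; first by rewrite ?(big_ord_recl, big_ord0) !mxE /= !mulr1.
apply/is_trig_mxP => i j.
by case: i => [[|[|[|[|[|[|[|[|[|//]]]]]]]]] ?];
   case: j => [[|[|[|[|[|[|[|[|[|//]]]]]]]]] ?]; rewrite ?mxE.
Qed.

Lemma det_U_factor : \det (U_factor ac) =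
  (1 / (6 * (3 + ac))) ^+ 9 * ((ac + 2) ^+ 2 * (3 * ac + 5) ^+ 3 * (ac - 1)).
Proof.
rewrite -det_tr det_trig.
  by rewrite ?(big_ord_recl, big_ord0) !mxE /=; field; rewrite ?rho_a_denoms_neq0.
apply/is_trig_mxP => i j.
by case: i => [[|[|[|[|[|[|[|[|[|//]]]]]]]]] ?];
   case: j => [[|[|[|[|[|[|[|[|[|//]]]]]]]]] ?]; rewrite ?mxE /= ?mulr0.
Qed.

Lemma det_idtens_Gamma_rho_a_lt0 : a < 1 -> \det (idtens (@Gamma C) (rho_a a)) < 0.
Proof.
move=> a_lt1; have a_lt1_C : ac < 1 by rewrite -(rmorph1 (real_complex R)) ltcR.
have scale_gt0 : 0 < (1 / (6 * (3 + ac))) ^+ 9.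
  by rewrite exprn_gt0 // divr_gt0 ?mulr_gt0 ?addr_gt0 ?a_gt0_C.
have pivots_gt0 : 0 < (ac + 2) ^+ 2 * (3 * ac + 5) ^+ 3.
  by rewrite mulr_gt0 ?exprn_gt0 ?addr_gt0 ?mulr_gt0 ?a_gt0_C.
rewrite idtens_Gamma_rho_a_LU det_mulmx det_L_factor mul1r det_U_factor.
by rewrite pmulr_rlt0 // pmulr_rlt0 // subr_lt0.
Qed.

End RhoA.

Theorem mainTheorem2 (R : rcfType) (a : R) (ha : 1 / 2 <= a) :
  let M := idtens (@Gamma (R[i])) (rho_a a) in
  is_state (rho_a a) /\
      psd (ptB (rho_a a)) /\
      M *m maxent_vec (R[i]) = (((a - 1) / (18 + 6 * a))%:C)%C *: maxent_vec (R[i]) /\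
      (char_poly M)`_0 = - \det M /\
      (a < 1 -> 0 < (char_poly M)`_0) /\
    (a < 1 -> entangled (rho_a a)).
Proof.
move=> M; have [rho_psd _] := rho_a_state ha.
have D9E : (char_poly M)`_0 = - \det M by rewrite char_poly_det -signr_odd expr1 mulN1r.
split; first exact: rho_a_state.
split; first by rewrite ptB_rho_a.
split; first exact: maxent_vec_eigen_rho_a.
split; first exact: D9E.
split=> a_lt1; first by rewrite D9E oppr_gt0 det_idtens_Gamma_rho_a_lt0.
split=> [|/separable_Gamma_witness_ge0]; first exact: rho_a_state.
by rewrite (lt_geF (Gamma_witness_rho_a_lt0 ha a_lt1)).
Qed.
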